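(* For any weighted undirected graph $G=(V,E,w)$, let $\mathcal T_{\mathrm{bal}}$ be any HC-tree obtained by the recursive $\frac13$-balanced min-cut procedure on $G$. Then $C_G(\mathcal T_{\mathrm{bal}})\le 9\cdot\mathrm{OPT}(G)$.
   Context: Let $G=(V,E,w)$ be an undirected graph with nonnegative edge weights. A hierarchical clustering tree (HC-tree) of $G$ is a rooted tree $\mathcal T$ whose leaves are in bijection with $V$. For a node $z$, $\mathcal T[z]$ is the subtree rooted at $z$ and $\mathrm{leaves}(\mathcal T[z])$ its set of leaves; $u\vee v$ is the lowest common ancestor of $u,v$. The cost is $C_G(\mathcal T)=\sum_{(u,v)\in E} w(u,v)\,|\mathrm{leaves}(\mathcal T[u\vee v])|$ and $\mathrm{OPT}(G)=\min_{\mathcal T}C_G(\mathcal T)$. For disjoint $A,B\subseteq V$, $w(A,B)$ is the total weight of edges between $A$ and $B$. If $\mathcal T$ is binary and $z$ is internal with children $z_1,z_2$, $|\mathrm{leaves}(\mathcal T[z_1])|\le|\mathrm{leaves}(\mathcal T[z_2])|$, then $\mathrm{cut}(\mathcal T[z])=(\mathrm{leaves}(\mathcal T[z_1]),\mathrm{leaves}(\mathcal T[z_2]))$. A pair of disjoint sets $(A,B)$ is $\beta$-balanced if $\max\{|A|,|B|\}\le(1-\beta)|A\cup B|$. The recursive $\beta$-balanced min-cut procedure produces a binary HC-tree in which, for every internal node $z$ with $S=\mathrm{leaves}(\mathcal T[z])$, the partition $\mathrm{cut}(\mathcal T[z])=(A,B)$ of $S$ is $\beta$-balanced and minimizes $w(A,B)$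 among all $\beta$-balanced partitions of $S$ into two parts (ties broken arbitrarily). *)

From HB Require Import structures.
From mathcomp Require Import all_boot all_order all_algebra.
Set Implicit Arguments. Unset Strict Implicit. Unset Printing Implicit Defensive.
Import Order.TTheory GRing.Theory Num.Theory.
Local Open Scope ring_scope.

Section HC.
Variable V : finType.

Inductive hctree : Type :=
| HLeaf of V
| HNode of seq hctree.

Fixpoint leaves (t : hctree) : seq V :=
  match t with
  | HLeaf v => [:: v]
  | HNode cs => flatten (map leaves cs)
  end.

(* Every internal node has at least one child (so leaves are exactly HLeaf's). *)
Fixpoint wf_tree (t : hctree) : bool :=
  match t with
  | HLeaf _ => true
  | HNode cs => (0 < size cs)%N && all wf_tree cs
  end.

Definition is_hctree (t : hctree) : Prop :=
  [/\ wf_tree t, uniq (leaves t) & forall v : V, v \in leaves t].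

Definition leafset (t : hctree) : {set V} := [set x in leaves t].

(* Number of leaves of the subtree rooted at the lowest common ancestor of
   the elements of S (S assumed contained in the leaves of t). *)
Fixpoint lca_size (S : {set V}) (t : hctree) : nat :=
  match t with
  | HLeaf _ => 1%N
  | HNode cs =>
      let fix go (l : seq hctree) : nat :=
        match l with
        | [::] => size (leaves t)
        | c :: l' => if S \subset leafset c then lca_size S c else go l'
        end
      in go cs
  end.

Variable R : realFieldType.

Definition wgraph (E : {set {set V}}) (w : {set V} -> R) : Prop :=
  (forall e, e \in E -> #|e| = 2%N) /\ (forall e, e \in E -> 0 <= w e).

Definition hc_cost (E : {set {set V}}) (w : {set V} -> R) (t : hctree) : R :=
  \sum_(e in E) w e * (lca_size e t)%:R.

Definition cut_weight (E : {set {set V}}) (w : {set V} -> R) (A B : {set V}) : R :=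
  \sum_(e in E | (e :&: A != set0) && (e :&: B != set0)) w e.

Definition balanced (beta : R) (A B : {set V}) : Prop :=
  (maxn #|A| #|B|)%:R <= (1 - beta) * (#|A :|: B|)%:R.

Definition bipartition (S A B : {set V}) : Prop :=
  A :|: B = S /\ A :&: B = set0.

Fixpoint bal_mincut_tree (E : {set {set V}}) (w : {set V} -> R) (beta : R)
    (t : hctree) : Prop :=
  match t with
  | HLeaf _ => True
  | HNode [:: t1; t2] =>
      [/\ balanced beta (leafset t1) (leafset t2),
          (forall A B : {set V}, bipartition (leafset t) A B ->
              balanced beta A B ->
              cut_weight E w (leafset t1) (leafset t2) <= cut_weight E w A B),
          bal_mincut_tree E w beta t1 & bal_mincut_tree E w beta t2]
  | HNode _ => False
  end.

End HC.

From HB Require Import structures.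
From mathcomp Require Import all_boot all_order all_algebra zify ring lra.
Import Order.TTheory GRing.Theory Num.Theory.
Set Implicit Arguments. Unset Strict Implicit. Unset Printing Implicit Defensive.

(* Fix any HC-tree T.  For each level k, "the lowest common ancestor of a and b
   in T has at most k leaves" is an equivalence relation whose classes have at
   most k elements.  Hence, for 1 <= k <= 2s/3, a set S of size s contains a
   union P of classes with s/3 <= |P| <= 2s/3: the cut (P, S \ P) is
   1/3-balanced and is crossed only by edges whose cluster in T has more than k
   leaves.  So the minimum balanced cut (S1, S2) at a node of Tbal with leaf
   set S is bounded, for each of the at least s/9 levels k in
   (floor(2 floor(2s/3)/3), floor(2s/3)], by the weight of such edges inside S;
   averaging, s w(S1, S2) <= 9 sum_(e in S) w(e) #{k in that range | k < |T[e]|}.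
   The children have at most floor(2s/3) leaves, so the level ranges of nested
   nodes are disjoint, and induction bounds the cost of the subtree on S by
   9 sum_(e in S) w(e) min(|T[e]| - 1, floor(2s/3)) <= 9 C_G(T). *)

Section Trees.
Variable V : finType.
Implicit Types (t c : hctree V) (cs : seq (hctree V)) (S : {set V}).

Fixpoint hctree_ind_in (P : hctree V -> Prop)
  (HL : forall v, P (HLeaf v))
  (HN : forall cs, (forall c, List.In c cs -> P c) -> P (HNode cs)) t : P t :=
  match t with
  | HLeaf v => HL v
  | HNode cs => HN cs
      ((fix G (l : seq (hctree V)) : forall c, List.In c l -> P c :=
          match l with
          | [::] => fun c (H : List.In c [::]) => False_ind _ H
          | c0 :: l' => fun c (H : List.In c (c0 :: l')) =>
              match H with
              | or_introl e => eq_ind c0 P (hctree_ind_in HL HN c0) c e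
              | or_intror H' => G l' c H'
              end
          end) cs)
  end.

Lemma in_leafset t x : (x \in leafset t) = (x \in leaves t).
Proof. by rewrite inE. Qed.

Lemma card_leafset t : uniq (leaves t) -> #|leafset t| = size (leaves t).
Proof. by move=> U; rewrite -(card_uniqP U); apply: eq_card => x; rewrite inE. Qed.

Lemma subset2 (a b : V) S : ([set a; b] \subset S) = (a \in S) && (b \in S).
Proof. by rewrite subUset !sub1set. Qed.

Lemma mem_leaves_child c cs x :
  List.In c cs -> x \in leaves c -> x \in leaves (HNode cs).
Proof.
rewrite /=; elim: cs => [|c0 cs IH] //= [<-|cs_c] xc; rewrite mem_cat ?xc //.
by rewrite IH ?orbT.
Qed.

Lemma mem_leaves_node cs x :
  x \in leaves (HNode cs) -> exists2 c, List.In c cs & x \in leaves c.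
Proof.
rewrite /=; elim: cs => [|c0 cs IH] //=; rewrite mem_cat => /orP[x0|/IH[c cs_c xc]].
  by exists c0; [left|].
by exists c; [right|].
Qed.

Lemma uniq_leaves_child c cs :
  uniq (leaves (HNode cs)) -> List.In c cs -> uniq (leaves c).
Proof.
rewrite /=; elim: cs => [|c0 cs IH] //=.
by rewrite cat_uniq => /and3P[U0 _ U] [<-|/(IH U)].
Qed.

Lemma size_leaves_child c cs :
  List.In c cs -> size (leaves c) <= size (leaves (HNode cs)).
Proof.
rewrite /=; elim: cs => [|c0 cs IH] //= [<-|/IH le_c]; rewrite size_cat ?leq_addr //.
exact: leq_trans le_c (leq_addl _ _).
Qed.

Lemma child_of_leaf_uniq c1 c2 cs x : uniq (leaves (HNode cs)) ->
  List.In c1 cs -> List.In c2 cs -> x \in leaves c1 -> x \in leaves c2 -> c1 = c2.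
Proof.
rewrite /=; elim: cs => [|c0 cs IH] //=; rewrite cat_uniq => /and3P[_ disj U].
have notin0 c : List.In c cs -> x \in leaves c -> x \notin leaves c0.
  move=> cs_c xc; apply: contra disj => x0; apply/hasP; exists x => //.
  exact: mem_leaves_child cs_c xc.
case=> [<-|cs_c1] [<-|cs_c2] // x1 x2.
- by move: (notin0 _ cs_c2 x2); rewrite x1.
- by move: (notin0 _ cs_c1 x1); rewrite x2.
- exact: IH.
Qed.

Lemma lca_size_nodeP S cs :
  (exists c, [/\ List.In c cs, S \subset leafset c &
                 lca_size S (HNode cs) = lca_size S c])
  \/ ((forall c, List.In c cs -> ~~ (S \subset leafset c)) /\
      lca_size S (HNode cs) = size (leaves (HNode cs))).
Proof.
rewrite /=; move: (size (flatten _)) => n.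
elim: cs => [|c cs IH] /=; first by right.
case: ifP => Sc; first by left; exists c; split=> //; left.
case: IH => [[c' [cs_c' Sc' ->]]|[notS ->]]; first by left; exists c'; split=> //; right.
by right; split=> // c0 [<-|/notS]; rewrite ?Sc.
Qed.

Lemma lca_size_child S c cs : uniq (leaves (HNode cs)) -> List.In c cs ->
  S != set0 -> S \subset leafset c -> lca_size S (HNode cs) = lca_size S c.
Proof.
move=> U cs_c /set0Pn[x Sx] Sc.
case: (lca_size_nodeP S cs) => [[c' [cs_c' Sc' ->]]|[notS _]].
  have := subsetP Sc' x Sx; have := subsetP Sc x Sx; rewrite !in_leafset => xc xc'.
  by rewrite (child_of_leaf_uniq U cs_c cs_c' xc xc').
by move: (notS c cs_c); rewrite Sc.
Qed.

Lemma lca_size_straddle S c cs v : uniq (leaves (HNode cs)) -> List.In c cs ->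
  v \in S -> v \in leaves c -> ~~ (S \subset leafset c) ->
  lca_size S (HNode cs) = size (leaves (HNode cs)).
Proof.
move=> U cs_c Sv vc notSc.
case: (lca_size_nodeP S cs) => [[c' [cs_c' Sc' _]]|[_ ->]] //.
have := subsetP Sc' v Sv; rewrite in_leafset => vc'.
by move: notSc; rewrite (child_of_leaf_uniq U cs_c cs_c' vc vc') Sc'.
Qed.

Lemma lca_size_le S t : lca_size S t <= size (leaves t).
Proof.
elim/hctree_ind_in: t => [v|cs IH] //.
case: (lca_size_nodeP S cs) => [[c [cs_c _ ->]]|[_ ->]] //.
exact: leq_trans (IH c cs_c) (size_leaves_child cs_c).
Qed.

Lemma lca_size1 t u : u \in leaves t -> lca_size [set u] t <= 1.
Proof.
elim/hctree_ind_in: t => [v|cs IH] // /mem_leaves_node[c cs_c uc].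
case: (lca_size_nodeP [set u] cs) => [[c' [cs_c' uc' ->]]|[notS _]].
  by apply: IH cs_c' _; rewrite -in_leafset -sub1set.
by move: (notS c cs_c); rewrite sub1set in_leafset uc.
Qed.

Lemma lca_size_ultra t u v x : uniq (leaves t) ->
  u \in leaves t -> v \in leaves t -> x \in leaves t ->
  lca_size [set u; x] t <= maxn (lca_size [set u; v] t) (lca_size [set v; x] t).
Proof.
elim/hctree_ind_in: t u v x => [y|cs IH] u v x U // _ /mem_leaves_node[c cs_c vc] _.
have straddle a b : b \in leaves c -> a \notin leaves c ->
    lca_size [set a; b] (HNode cs) = size (leaves (HNode cs)).
  move=> bc ac; apply: (lca_size_straddle U cs_c (v := b)); rewrite ?inE ?eqxx ?orbT //.
  by rewrite subset2 in_leafset (negbTE ac).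
case uc: (u \in leaves c); last first.
  by rewrite [lca_size [set u; v] _]straddle ?uc // leq_max lca_size_le.
case xc: (x \in leaves c); last first.
  by rewrite [[set v; x]]setUC [lca_size [set x; v] _]straddle ?xc // leq_max lca_size_le orbT.
have ne2 a b : [set a; b] != set0 :> {set V} by apply/set0Pn; exists a; rewrite !inE eqxx.
rewrite !(lca_size_child U cs_c (ne2 _ _)) ?subset2 ?in_leafset ?uc ?vc ?xc //.
exact: IH (uniq_leaves_child U cs_c) uc vc xc.
Qed.

Lemma card_lca_ball t u k : uniq (leaves t) -> u \in leaves t -> 1 <= k ->
  #|[set v in leafset t | lca_size [set u; v] t <= k]| <= k.
Proof.
elim/hctree_ind_in: t u => [y|cs IH] u U ut k_gt0.
  apply: leq_trans (subset_leq_card (_ : _ \subset leafset (HLeaf y))) _.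
    by apply/subsetP => z; rewrite inE => /andP[].
  by rewrite card_leafset.
case: (leqP (size (leaves (HNode cs))) k) => [small|big].
  apply: leq_trans (subset_leq_card (_ : _ \subset leafset (HNode cs))) _.
    by apply/subsetP => z; rewrite inE => /andP[].
  by rewrite card_leafset.
have [c cs_c uc] := mem_leaves_node ut.
apply: leq_trans (IH c cs_c u (uniq_leaves_child U cs_c) uc k_gt0).
apply: subset_leq_card; apply/subsetP => v; rewrite !inE => /andP[vt le_k].
case vc: (v \in leaves c).
  rewrite -(lca_size_child U cs_c) ?subset2 ?in_leafset ?uc ?vc //.
  by apply/set0Pn; exists u; rewrite !inE eqxx.
move: le_k; rewrite (lca_size_straddle U cs_c (v := u)) ?inE ?eqxx //.
  by rewrite leqNgt big.
by rewrite subset2 !in_leafset vc andbF.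
Qed.

Lemma leafset_node2 t1 t2 : leafset (HNode [:: t1; t2]) = leafset t1 :|: leafset t2.
Proof. by apply/setP => x; rewrite !inE /= cats0 mem_cat. Qed.

Lemma leafset_node2_disjoint t1 t2 :
  uniq (leaves (HNode [:: t1; t2])) -> [disjoint leafset t1 & leafset t2].
Proof.
rewrite /= cats0 cat_uniq => /and3P[_ disj _]; apply/pred0P => x /=.
by rewrite !in_leafset; apply/negbTE/andP => -[x1 x2]; move/hasP: disj; apply; exists x.
Qed.

Lemma leafset_hctree t : is_hctree t -> leafset t = setT.
Proof. by case=> _ _ tall; apply/setP => x; rewrite in_leafset tall inE. Qed.

End Trees.

Section Levels.
Variables (V : finType) (T : hctree V).
Hypothesis hT : is_hctree T.
Implicit Types (S P : {set V}) (k : nat).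

Definition near k (a b : V) := lca_size [set a; b] T <= k.

Definition ball k S a := [set b in S | near k a b].

Lemma ball_subset k S a : ball k S a \subset S.
Proof. by apply/subsetP => b; rewrite inE => /andP[]. Qed.

Lemma near_refl k a : 1 <= k -> near k a a.
Proof. by case: hT => _ _ Tall k_gt0; rewrite /near setUid (leq_trans (lca_size1 (Tall a))). Qed.

Lemma near_trans k a b x : near k a b -> near k b x -> near k a x.
Proof.
case: hT => _ U Tall ab bx.
by apply: leq_trans (lca_size_ultra U (Tall a) (Tall b) (Tall x)) _; rewrite geq_max; apply/andP.
Qed.

Lemma card_ball k S a : 1 <= k -> #|ball k S a| <= k.
Proof.
case: hT => _ U Tall k_gt0; apply: leq_trans (card_lca_ball U (Tall a) k_gt0).
by apply: subset_leq_card; apply/subsetP => b; rewrite !inE Tall => /andP[].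
Qed.

Definition near_closed k S P := [forall a in P, ball k S a \subset P].

Lemma ball_closed k S a : near_closed k S (ball k S a).
Proof.
apply/forall_inP => b; rewrite inE => /andP[_ ab].
by apply/subsetP => x; rewrite !inE => /andP[-> /(near_trans ab)].
Qed.

Lemma near_closedU k S P Q :
  near_closed k S P -> near_closed k S Q -> near_closed k S (P :|: Q).
Proof.
move=> /forall_inP clP /forall_inP clQ; apply/forall_inP => a.
by case/setUP => [/clP|/clQ] sub; rewrite (subset_trans sub) ?subsetUl ?subsetUr.
Qed.

(* A maximal near-closed subset of S of size at most 2|S|/3 either has size at
   least |S|/3 or can be enlarged by a ball, which then has size at least |S|/3. *)
Lemma balanced_level_cut k S : 1 <= k -> 3 * k <= 2 * #|S| ->
  exists P, [/\ P \subset S, #|S| <= 3 * #|P|, 3 * #|P| <= 2 * #|S| &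
    forall a b, a \in P -> b \in S :\: P -> k < lca_size [set a; b] T].
Proof.
move=> k_gt0 k_small.
pose good P := [&& P \subset S, near_closed k S P & 3 * #|P| <= 2 * #|S|].
suff [P /and3P[PS clP Psmall] Plarge] : exists2 P, good P & #|S| <= 3 * #|P|.
  exists P; split=> // a b Pa /setDP[Sb Pb]; rewrite ltnNge; apply: contra Pb => ab.
  by move/forall_inP: clP => /(_ a Pa)/subsetP; apply; rewrite inE Sb.
have good0 : good set0 by rewrite /good sub0set cards0 andbT; apply/forall_inP => a; rewrite inE.
case: (@arg_maxnP _ set0 good (fun P => #|P|) good0) => P /and3P[PS clP Psmall] Pmax.
case: (leqP #|S| (3 * #|P|)) => [Plarge|Psmall']; first by exists P; rewrite /good ?PS ?clP.
have [u /setDP[Su Pu]] : exists u, u \in S :\: P.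
  by apply/set0Pn; rewrite -card_gt0 cardsD (setIidPr PS); lia.
have PBsub : P :|: ball k S u \subset S by rewrite subUset PS ball_subset.
have PBbig : 2 * #|S| < 3 * #|P :|: ball k S u|.
  rewrite ltnNge; apply/negP => PBsmall.
  have := Pmax _ (introT and3P (And3 PBsub (near_closedU clP (ball_closed k S u)) PBsmall)).
  apply/negP; rewrite -ltnNge; apply: proper_card; rewrite properE subsetUl.
  by apply/subsetP => /(_ u); rewrite !inE Su near_refl // orbT (negbTE Pu) => /(_ isT).
exists (ball k S u); last by move: PBbig; rewrite cardsU; lia.
have Bsmall := card_ball S u k_gt0.
by rewrite /good ball_closed ball_subset /=; lia.
Qed.

End Levels.

Definition two_thirds n := (2 * n) %/ 3.

Lemma minn_pred_split L a b : a <= b ->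
  minn L.-1 b = minn L.-1 a + \sum_(a.+1 <= k < b.+1) (k < L).
Proof.
elim: b => [|b IH] ab; first by rewrite big_geq //; lia.
case: (ltngtP a b.+1) ab => // [ab _|-> _]; last by rewrite big_geq //; lia.
by rewrite big_nat_recr //= addnA -(IH ab); lia.
Qed.

Local Open Scope ring_scope.

Section Cost.
Variables (V : finType) (R : realFieldType) (E : {set {set V}}) (w : {set V} -> R).
Hypothesis hw : wgraph E w.
Implicit Types (S A B : {set V}) (e : {set V}) (f g : {set V} -> nat).

Lemma card_edge e : e \in E -> #|e| = 2%N.
Proof. by case: hw => + _; apply. Qed.

Lemma weight_ge0 e : e \in E -> 0 <= w e.
Proof. by case: hw => _; apply. Qed.

Definition crossing A B e := (e :&: A != set0) && (e :&: B != set0).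

Definition edge_sum S f : R := \sum_(e in E | e \subset S) w e * (f e)%:R.

Lemma setI2_neq0 (x y : V) A : ([set x; y] :&: A != set0) = (x \in A) || (y \in A).
Proof.
apply/set0Pn/orP => [[z]|[Ax|Ay]]; last 2 first.
- by exists x; rewrite !inE eqxx Ax.
- by exists y; rewrite !inE eqxx Ay orbT.
by rewrite !inE => /andP[/orP[]/eqP-> ->]; [left|right].
Qed.

Lemma crossing_edge A B e : e \in E -> [disjoint A & B] -> crossing A B e ->
  exists x y, [/\ e = [set x; y], x \in A & y \in B].
Proof.
move=> eE AB /andP[/set0Pn[x /setIP[ex Ax]] /set0Pn[y /setIP[ey By]]].
have xy : x != y by apply: contraTneq By => <-; rewrite (disjointFr AB Ax).
exists x, y; split=> //; apply/esym/eqP; rewrite eqEcard subset2 ex ey.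
by rewrite cards2 xy card_edge.
Qed.

Lemma cut_weight_ge0 A B : 0 <= cut_weight E w A B.
Proof. by apply: sumr_ge0 => e /andP[eE _]; rewrite weight_ge0. Qed.

Lemma edge_sum_ge0 S f : 0 <= edge_sum S f.
Proof. by apply: sumr_ge0 => e /andP[eE _]; rewrite mulr_ge0 ?weight_ge0. Qed.

Lemma ler_edge_sum S f g : (forall e, e \in E -> e \subset S -> (f e <= g e)%N) ->
  edge_sum S f <= edge_sum S g.
Proof.
move=> fg; apply: ler_sum => e /andP[eE eS].
by rewrite ler_wpM2l ?weight_ge0 ?ler_nat ?fg.
Qed.

Lemma edge_sumD S f g : edge_sum S (fun e => f e + g e)%N = edge_sum S f + edge_sum S g.
Proof. by rewrite -big_split; apply: eq_bigr => e _; rewrite natrD mulrDr. Qed.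

Lemma edge_sumU S1 S2 f : [disjoint S1 & S2] ->
  edge_sum (S1 :|: S2) f = edge_sum S1 f + edge_sum S2 f +
                           \sum_(e in E | crossing S1 S2 e) w e * (f e)%:R.
Proof.
move=> S12; rewrite /edge_sum (bigID (fun e => e \subset S1)) /=.
rewrite [X in _ + X](bigID (fun e => e \subset S2)) /= addrA.
congr (_ + _ + _); apply: eq_bigl => e; case eE: (e \in E) => //=.
all: have /eqP/cards2P[x [y [_ ->]]] := card_edge eE.
all: rewrite /crossing ?setI2_neq0 !subset2 !inE.
all: case x1: (x \in S1); case y1: (y \in S1); rewrite ?(disjointFr S12 x1) ?(disjointFr S12 y1) //=.
all: by case: (x \in S2); case: (y \in S2).
Qed.

Lemma balanced_third A B :
  balanced (1 / 3 : R) A B <-> (3 * maxn #|A| #|B| <= 2 * #|A :|: B|)%N.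
Proof.
rewrite /balanced (_ : 1 - 1 / 3 = 2 / 3 :> R); last by field.
by rewrite mulrAC ler_pdivlMr ?ltr0n // -!natrM ler_nat mulnC (mulnC 2).
Qed.

Lemma disjoint_setD (P S : {set V}) : [disjoint P & S :\: P].
Proof. by rewrite disjoints_subset setDE setCI setCK subsetUr. Qed.

Lemma cut_weight_le_level (T : hctree V) k (P S : {set V}) : P \subset S ->
  (forall a b, a \in P -> b \in S :\: P -> (k < lca_size [set a; b] T)%N) ->
  cut_weight E w P (S :\: P) <= edge_sum S (fun e => k < lca_size e T)%N.
Proof.
move=> PS sep; rewrite /cut_weight /edge_sum !big_mkcondr /=.
apply: ler_sum => e eE; rewrite -/(crossing P (S :\: P) e).
case cr: (crossing P (S :\: P) e); last first.
  by case: ifP => // _; rewrite mulr_ge0 ?weight_ge0.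
have [x [y [exy Px SPy]]] := crossing_edge eE (disjoint_setD P S) cr.
have Sy : y \in S by move: SPy; rewrite inE => /andP[].
by rewrite exy subset2 (subsetP PS _ Px) Sy sep // mulr1.
Qed.

Section MinCut.
Variables (T : hctree V) (S S1 S2 : {set V}).
Hypotheses (hT : is_hctree T) (S1US2 : S1 :|: S2 = S) (S1IS2 : [disjoint S1 & S2]).
Hypothesis S12_min : forall A B, bipartition S A B -> balanced (1 / 3 : R) A B ->
  cut_weight E w S1 S2 <= cut_weight E w A B.

Lemma mincut_le_level k : (1 <= k)%N -> (3 * k <= 2 * #|S|)%N ->
  cut_weight E w S1 S2 <= edge_sum S (fun e => k < lca_size e T)%N.
Proof.
move=> k_gt0 k_small.
have [P [PS Plarge Psmall sep]] := balanced_level_cut hT k_gt0 k_small.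
apply: le_trans (cut_weight_le_level PS sep).
have PUSP : P :|: (S :\: P) = S by rewrite setDE setUIr setUCr setIT; apply/setUidPr.
apply: S12_min; first by split; rewrite // disjoint_setI0 ?disjoint_setD.
by rewrite balanced_third PUSP cardsD (setIidPr PS); lia.
Qed.

Lemma mincut_le_levels :
  #|S|%:R * cut_weight E w S1 S2 <=
  9 * edge_sum S (fun e =>
        \sum_((two_thirds (two_thirds #|S|)).+1 <= k < (two_thirds #|S|).+1)
           (k < lca_size e T))%N.
Proof.
set a := two_thirds (two_thirds _); set b := two_thirds _.
case: (leqP #|S| 1) => [S_small|S_large].
  rewrite (_ : cut_weight _ _ _ _ = 0) ?mulr0 ?mulr_ge0 ?edge_sum_ge0 //.
  rewrite /cut_weight big1 // => e /andP[eE cr]; exfalso.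
  have [x [y [exy Sx Sy]]] := crossing_edge eE S1IS2 cr.
  have : [set x; y] \subset S by rewrite -S1US2 subset2 !inE Sx Sy orbT.
  by move/subset_leq_card; rewrite -exy card_edge //; lia.
have levels : (b - a)%:R * cut_weight E w S1 S2 <=
    \sum_(a.+1 <= k < b.+1) edge_sum S (fun e => k < lca_size e T)%N.
  rewrite mulr_natl -[(b - a)%N]subSS -sumr_const_nat.
  apply: ler_sum_nat => k /andP[ak kb]; apply: mincut_le_level; first by lia.
  by move: kb; rewrite /b /two_thirds; lia.
have ->: edge_sum S (fun e => \sum_(a.+1 <= k < b.+1) (k < lca_size e T))%N =
    \sum_(a.+1 <= k < b.+1) edge_sum S (fun e => k < lca_size e T)%N.
  rewrite /edge_sum exchange_big /=; apply: eq_bigr => e _.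
  by rewrite natr_sum mulr_sumr.
apply: le_trans (_ : _ <= 9 * ((b - a)%:R * cut_weight E w S1 S2)) _.
  rewrite mulrA -natrM ler_wpM2r ?cut_weight_ge0 // ler_nat /b /a /two_thirds; lia.
by rewrite ler_wpM2l.
Qed.

End MinCut.

Lemma edge_neq0 e : e \in E -> e != set0.
Proof. by move=> eE; rewrite -card_gt0 card_edge. Qed.

Lemma edge_sum_lca_node2 t1 t2 (t := HNode [:: t1; t2]) : uniq (leaves t) ->
  edge_sum (leafset t) (fun e => lca_size e t) =
  edge_sum (leafset t1) (fun e => lca_size e t1) + edge_sum (leafset t2) (fun e => lca_size e t2) +
  #|leafset t|%:R * cut_weight E w (leafset t1) (leafset t2).
Proof.
move=> U; have in1 : List.In t1 [:: t1; t2] by left.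
have in2 : List.In t2 [:: t1; t2] by right; left.
rewrite leafset_node2 edge_sumU ?leafset_node2_disjoint //.
congr (_ + _ + _).
- by apply: eq_bigr => e /andP[eE e_sub]; rewrite (lca_size_child U in1 (edge_neq0 eE) e_sub).
- by apply: eq_bigr => e /andP[eE e_sub]; rewrite (lca_size_child U in2 (edge_neq0 eE) e_sub).
rewrite /cut_weight mulr_sumr; apply: eq_bigr => e /andP[eE cr].
have [x [y [exy x1 y2]]] := crossing_edge eE (leafset_node2_disjoint U) cr.
rewrite mulrC -leafset_node2 card_leafset // exy (lca_size_straddle U in1 (v := x)) //.
- by rewrite !inE eqxx.
- by rewrite -in_leafset.
by rewrite subset2 (disjointFl (leafset_node2_disjoint U) y2) andbF.
Qed.

Lemma bal_mincut_edge_sum_le (T : hctree V) t : is_hctree T ->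
  bal_mincut_tree E w (1 / 3) t -> uniq (leaves t) ->
  edge_sum (leafset t) (fun e => lca_size e t) <=
  9 * edge_sum (leafset t) (fun e => minn (lca_size e T).-1 (two_thirds #|leafset t|)).
Proof.
move=> hT; elim/hctree_ind_in: t => [v|cs IH] bal U.
  rewrite [X in X <= _]big_pred0 ?mulr_ge0 ?edge_sum_ge0 // => e.
  by apply/negP => /andP[eE /subset_leq_card]; rewrite card_edge // card_leafset.
case: cs IH bal U => [|t1 [|t2 [|? ?]]] IH bal U; try by case: bal.
case: bal => bal12 min12 bal1 bal2.
have in1 : List.In t1 [:: t1; t2] by left.
have in2 : List.In t2 [:: t1; t2] by right; left.
have IH1 := IH t1 in1 bal1 (uniq_leaves_child U in1).
have IH2 := IH t2 in2 bal2 (uniq_leaves_child U in2).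
have S12 := leafset_node2 t1 t2; have S1IS2 := leafset_node2_disjoint U.
set S := leafset _ in S12 min12 *; set S1 := leafset t1 in IH1 S12 bal12 S1IS2 *.
set S2 := leafset t2 in IH2 S12 bal12 S1IS2 *.
set a := two_thirds (two_thirds #|S|).
have shrink S' : (3 * #|S'| <= 2 * #|S|)%N ->
    edge_sum S' (fun e => minn (lca_size e T).-1 (two_thirds #|S'|)) <=
    edge_sum S' (fun e => minn (lca_size e T).-1 a).
  by move=> S'_small; apply: ler_edge_sum => e _ _; rewrite /a /two_thirds; lia.
move/balanced_third: bal12; rewrite -S12 => bal12.
have := shrink S1 ltac:(lia); have := shrink S2 ltac:(lia).
have levels := mincut_le_levels hT (esym S12) S1IS2 min12; rewrite -/a in levels.
have split_levels :
    edge_sum S (fun e => minn (lca_size e T).-1 (two_thirds #|S|)) =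
    edge_sum S (fun e => minn (lca_size e T).-1 a) +
    edge_sum S (fun e => \sum_(a.+1 <= k < (two_thirds #|S|).+1) (k < lca_size e T))%N.
  rewrite -edge_sumD; apply: eq_bigr => e _.
  by rewrite -minn_pred_split // /a /two_thirds; lia.
have split_sets := edge_sumU (fun e => minn (lca_size e T).-1 a) S1IS2; rewrite -S12 in split_sets.
have : 0 <= \sum_(e in E | crossing S1 S2 e) w e * (minn (lca_size e T).-1 a)%:R.
  by apply: sumr_ge0 => e /andP[eE _]; rewrite mulr_ge0 ?weight_ge0.
rewrite edge_sum_lca_node2 // -/S -/S1 -/S2 split_levels split_sets.
lra.
Qed.

Lemma hc_costE t : hc_cost E w t = edge_sum setT (fun e => lca_size e t).
Proof. by apply: eq_bigl => e; rewrite subsetT andbT. Qed.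

End Cost.

Theorem lemma2p5 (R : realFieldType) (V : finType)
    (E : {set {set V}}) (w : {set V} -> R) (Tbal : hctree V) :
  wgraph E w ->
  is_hctree Tbal ->
  bal_mincut_tree E w (1 / 3) Tbal ->
  forall T : hctree V, is_hctree T ->
    hc_cost E w Tbal <= 9 * hc_cost E w T.
Proof.
move=> hw hTbal bal T hT.
have [_ Ubal _] := hTbal.
rewrite !hc_costE -(leafset_hctree hTbal).
apply: le_trans (bal_mincut_edge_sum_le hw hT bal Ubal) _.
rewrite ler_wpM2l // leafset_hctree //.
by apply: ler_edge_sum => // e _ _; lia.
Qed.
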